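(* Let $a\ge b\ge1$ be integers with either $b\ge2$, or $b=1$ and $a\ge5$, and $A=\begin{pmatrix}2&-a\\-b&2\end{pmatrix}$. Then: (1) if $j\in\mathbb Z_+$, $k\ge1$ and $j\equiv k\pmod 2$, then $(\beta_1^j,\beta_2^k)=(\beta_1^{j+1},\beta_2^{k-1})$; (2) the sequence $\langle\beta_1^{2k},(\beta_2^0)^\vee\rangle$, $k\in\mathbb Z_+$, is decreasing, and strictly decreasing if $ab>4$; (3) $a\langle\beta_2^{2k},(\beta_1^0)^\vee\rangle=b\langle\beta_1^{2k},(\beta_2^0)^\vee\rangle$ for all $k\in\mathbb Z_+$.
   Context: Let $\mathfrak g(A)$ have simple roots $\alpha_1,\alpha_2$, invariant symmetric bilinear form $(\cdot,\cdot)$ with $(\alpha_1,\alpha_1)=2$, $(\alpha_2,\alpha_2)=2a/b$, $(\alpha_1,\alpha_2)=-a$, and for a real root $\beta$ let $\langle\lambda,\beta^\vee\rangle=2(\lambda,\beta)/(\beta,\beta)$. $\mathbb Z_+=\{0,1,2,\dots\}$. Define $c_0=d_0=0$, $c_1=d_1=1$, $c_{k+2}+c_k=a d_{k+1}$, $d_{k+2}+d_k=b c_{k+1}$, and $\beta_1^j=c_j\alpha_1+d_{j+1}\alpha_2$, $\beta_2^j=c_{j+1}\alpha_1+d_j\alpha_2$. *)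

From mathcomp Require Import all_boot all_order all_algebra.
Set Implicit Arguments. Unset Strict Implicit. Unset Printing Implicit Defensive.
Import Order.TTheory GRing.Theory Num.Theory.
Local Open Scope ring_scope.

(* Rank-2 root lattice with basis alpha_1, alpha_2; an element
   x alpha_1 + y alpha_2 is represented by the pair (x, y) of rationals. *)
Definition elt := (rat * rat)%type.

Fixpoint cseq (a b : nat) (n : nat) : rat :=
  match n with
  | 0%N => 0
  | S m1 => match m1 with
            | 0%N => 1
            | S m => a%:R * dseq a b m1 - cseq a b m
            end
  end
with dseq (a b : nat) (n : nat) : rat :=
  match n with
  | 0%N => 0
  | S m1 => match m1 with
            | 0%N => 1
            | S m => b%:R * cseq a b m1 - dseq a b m
            end
  end.

Definition beta1 (a b j : nat) : elt := (cseq a b j, dseq a b j.+1).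
Definition beta2 (a b j : nat) : elt := (cseq a b j.+1, dseq a b j).

(* invariant symmetric bilinear bform:
   (a1,a1) = 2, (a2,a2) = 2a/b, (a1,a2) = -a *)
Definition bform (a b : nat) (u v : elt) : rat :=
  2 * u.1 * v.1 - a%:R * (u.1 * v.2 + u.2 * v.1)
  + (2 * a%:R / b%:R) * u.2 * v.2.

Definition copair (a b : nat) (lam beta : elt) : rat :=
  2 * bform a b lam beta / bform a b beta beta.

From mathcomp Require Import all_boot all_order all_algebra.
From mathcomp Require Import ring lra zify.
Import Order.TTheory GRing.Theory Num.Theory.
Local Open Scope ring_scope.

(* The recurrences say beta_2^{k+1} = s_1 beta_1^k and beta_1^{j+1} = s_2 beta_2^j
   for the simple reflections s_1, s_2, which are self-adjoint for the invariant
   form; moving one reflection across the pairing turns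
   (beta_1^{j+2}, beta_2^k) into (beta_1^j, beta_2^{k+2}), whence (1).
   On even indices c_{2k+1} = d_{2k+1} and a d_{2k} = b c_{2k}, so the even
   terms e_k = c_{2k} satisfy e_{k+2} = (ab - 2) e_{k+1} - e_k with e_0 = 0,
   e_1 = a, and grow at least linearly when ab >= 4.  The consecutive
   differences in (2) equal (ab - 4) c_{2k+2}, and (3) is the even-index
   relation above. *)

Lemma rec2_ge_linear (R : realDomainType) (t : R) (e : nat -> R) :
  2 <= t -> (forall n, e n.+2 = t * e n.+1 - e n) -> 0 <= e 0 <= e 1 ->
  forall n, e 0 + n%:R * (e 1 - e 0) <= e n.
Proof.
move=> t_ge2 e_rec /andP[e0_ge0 e01] n.
suff [] : e 0 + n%:R * (e 1 - e 0) <= e n /\ e n + (e 1 - e 0) <= e n.+1 by [].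
elim: n => [|n [IHlin IHinc]]; first by rewrite mul0r addr0; split; lra.
have lin_ge0 : 0 <= n%:R * (e 1 - e 0) by rewrite mulr_ge0 ?ler0n ?subr_ge0.
have curv_ge0 : 0 <= (t - 2) * e n.+1 by apply: mulr_ge0; lra.
by rewrite e_rec mulrSr; split; lra.
Qed.

Definition srefl1 (a : nat) (u : elt) : elt := (a%:R * u.2 - u.1, u.2).
Definition srefl2 (b : nat) (u : elt) : elt := (u.1, b%:R * u.1 - u.2).

Section RankTwo.

Variables a b : nat.
Hypotheses (a_gt0 : (0 < a)%N) (b_gt0 : (0 < b)%N).

Let a_neq0 : (a%:R : rat) != 0. Proof. by rewrite pnatr_eq0 -lt0n. Qed.
Let b_neq0 : (b%:R : rat) != 0. Proof. by rewrite pnatr_eq0 -lt0n. Qed.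

Lemma cseqSS n : cseq a b n.+2 = a%:R * dseq a b n.+1 - cseq a b n.
Proof. by []. Qed.

Lemma dseqSS n : dseq a b n.+2 = b%:R * cseq a b n.+1 - dseq a b n.
Proof. by []. Qed.

Lemma bformC u v : bform a b u v = bform a b v u.
Proof. by rewrite /bform; ring. Qed.

Lemma bform_srefl1 u v : bform a b (srefl1 a u) v = bform a b u (srefl1 a v).
Proof. by rewrite /bform /=; ring. Qed.

Lemma bform_srefl2 u v : bform a b (srefl2 b u) v = bform a b u (srefl2 b v).
Proof. by rewrite /bform /=; field. Qed.

Lemma beta1S j : beta1 a b j.+1 = srefl2 b (beta2 a b j).
Proof. by rewrite /beta1 /beta2 dseqSS. Qed.

Lemma beta2S k : beta2 a b k.+1 = srefl1 a (beta1 a b k).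
Proof. by rewrite /beta1 /beta2 cseqSS. Qed.

Definition beta_pairing j k := bform a b (beta1 a b j) (beta2 a b k).

Lemma beta_pairingSl j k : beta_pairing j.+1 k = beta_pairing k.+1 j.
Proof. by rewrite /beta_pairing !beta1S bform_srefl2 bformC. Qed.

Lemma beta_pairingSr j k : beta_pairing j k.+1 = beta_pairing k j.+1.
Proof. by rewrite /beta_pairing !beta2S -bform_srefl1 bformC. Qed.

Lemma beta_pairing_shift2 j k : beta_pairing j.+2 k = beta_pairing j k.+2.
Proof. by rewrite beta_pairingSl beta_pairingSr. Qed.

Lemma beta_pairing_shift j k m :
  beta_pairing (j + m.*2) k = beta_pairing j (k + m.*2).
Proof.
elim: m j k => [|m IHm] j k; first by rewrite !addn0.
by rewrite doubleS !addnS beta_pairing_shift2 -!addSn IHm.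
Qed.

Lemma beta_pairing_sym j k : odd j = odd k -> beta_pairing j k = beta_pairing k j.
Proof.
wlog le_jk : j k / (j <= k)%N.
  by move=> sym_le; case: (leqP j k) => [/sym_le//|/ltnW/sym_le sym_kj /esym/sym_kj].
move=> odd_jk; have even_kj : ~~ odd (k - j) by rewrite oddB // odd_jk addbb.
rewrite -(subnKC le_jk) -(even_halfK even_kj).
by rewrite -[in RHS](addn0 j) beta_pairing_shift addn0.
Qed.

Lemma beta_pairing_transfer j k : (1 <= k)%N -> odd j = odd k ->
  beta_pairing j k = beta_pairing j.+1 k.-1.
Proof.
case: k => [//|k] _ odd_jk.
by rewrite beta_pairing_sym // beta_pairingSl.
Qed.

Lemma cseq_dseq_parity n :
  cseq a b (2 * n).+1 = dseq a b (2 * n).+1 /\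
  a%:R * dseq a b (2 * n) = b%:R * cseq a b (2 * n).
Proof.
elim: n => [|n [IHodd IHeven]]; first by split; rewrite muln0 ?mulr0.
have even_step : a%:R * dseq a b (2 * n).+2 = b%:R * cseq a b (2 * n).+2.
  by rewrite dseqSS cseqSS IHodd; lra.
rewrite mulnS add2n; split=> //.
by rewrite (cseqSS (2 * n).+1) (dseqSS (2 * n).+1) even_step IHodd.
Qed.

Lemma cseq_odd_dseq n : cseq a b (2 * n).+1 = dseq a b (2 * n).+1.
Proof. by have [] := cseq_dseq_parity n. Qed.

Lemma dseq_even_cseq n : a%:R * dseq a b (2 * n) = b%:R * cseq a b (2 * n).
Proof. by have [] := cseq_dseq_parity n. Qed.

Lemma cseq_even_rec n :
  cseq a b (2 * n.+2) = ((a * b)%:R - 2) * cseq a b (2 * n.+1) - cseq a b (2 * n).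
Proof.
have odd0 := cseq_odd_dseq n; have odd1 := cseq_odd_dseq n.+1.
have even1 := dseq_even_cseq n.+1.
rewrite !mulnS !add2n in odd1 even1 *.
rewrite cseqSS -odd1 cseqSS mulrBr even1 (cseqSS (2 * n)) odd0 natrM; ring.
Qed.

Lemma copair_beta1_alpha1 n :
  copair a b (beta1 a b n) (beta2 a b 0) = 2 * cseq a b n - a%:R * dseq a b n.+1.
Proof. by rewrite /copair /bform /beta1 /beta2 /=; field. Qed.

Lemma copair_beta2_alpha2 n :
  copair a b (beta2 a b n) (beta1 a b 0) = 2 * dseq a b n - b%:R * cseq a b n.+1.
Proof. by rewrite /copair /bform /beta1 /beta2 /=; field; rewrite a_neq0 b_neq0. Qed.

Lemma copair_beta1_even_diff k :
  copair a b (beta1 a b (2 * k)) (beta2 a b 0)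
  - copair a b (beta1 a b (2 * k.+1)) (beta2 a b 0)
  = ((a * b)%:R - 4) * cseq a b (2 * k.+1).
Proof.
have odd0 := cseq_odd_dseq k; have odd1 := cseq_odd_dseq k.+1.
have even1 := dseq_even_cseq k.+1.
rewrite !copair_beta1_alpha1 -odd0 -odd1.
rewrite !mulnS !add2n in odd1 even1 *.
rewrite (cseqSS (2 * k).+1) (mulrBr a%:R (a%:R * _)) even1 (cseqSS (2 * k)) -odd0.
rewrite natrM; ring.
Qed.

Lemma cseq_even_ge (ab_ge4 : (4 <= a * b)%N) k : k%:R * a%:R <= cseq a b (2 * k).
Proof.
have cseq0 : cseq a b (2 * 0) = 0 by [].
have cseq2 : cseq a b (2 * 1) = a%:R by rewrite cseqSS /= mulr1 subr0.
have := @rec2_ge_linear _ _ (fun n => cseq a b (2 * n)) _ cseq_even_rec _ k.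
rewrite cseq0 cseq2 subr0 add0r; apply; first by rewrite lerBrDr (ler_nat _ 4).
by rewrite lexx ler0n.
Qed.

End RankTwo.

Theorem lemma3p10 (a b : nat) :
  (b <= a)%N -> (1 <= b)%N -> ((2 <= b)%N \/ (b = 1%N /\ (5 <= a)%N)) ->
  [/\ (forall j k : nat, (1 <= k)%N -> odd j = odd k ->
         bform a b (beta1 a b j) (beta2 a b k)
         = bform a b (beta1 a b j.+1) (beta2 a b k.-1)),
      (forall k : nat,
         copair a b (beta1 a b (2 * k.+1)%N) (beta2 a b 0)
         <= copair a b (beta1 a b (2 * k)%N) (beta2 a b 0)),
      ((4 < a * b)%N -> forall k : nat,
         copair a b (beta1 a b (2 * k.+1)%N) (beta2 a b 0)
         < copair a b (beta1 a b (2 * k)%N) (beta2 a b 0))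
    & (forall k : nat,
         a%:R * copair a b (beta2 a b (2 * k)%N) (beta1 a b 0)
         = b%:R * copair a b (beta1 a b (2 * k)%N) (beta2 a b 0))].
Proof.
move=> le_ba b_gt0 ab_cases.
have a_gt0 : (0 < a)%N by lia.
have ab_ge4 : (4 <= a * b)%N by case: ab_cases => [|[-> ]]; nia.
have cseq_even_gt0 k : 0 < cseq a b (2 * k.+1).
  apply: lt_le_trans (cseq_even_ge _ _ ab_ge4 k.+1).
  by rewrite -natrM ltr0n muln_gt0.
split.
- exact: beta_pairing_transfer.
- move=> k; rewrite -subr_ge0 copair_beta1_even_diff //.
  by rewrite mulr_ge0 ?(ltW (cseq_even_gt0 k)) // subr_ge0 (ler_nat _ 4).
- move=> ab_gt4 k; rewrite -subr_gt0 copair_beta1_even_diff //.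
  by rewrite mulr_gt0 // subr_gt0 (ltr_nat _ 4).
- move=> k; rewrite copair_beta2_alpha2 // copair_beta1_alpha1 // cseq_odd_dseq.
  have := dseq_even_cseq a b k; lra.
Qed.
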